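(* Let $S$ be a finite set with $|S|=\kappa$, and let $r:S\times S\to[0,\infty)$ satisfy $r(x,y)>0$ for all distinct $x,y\in S$ (and $r(x,x)=0$). Consider the inclusion process on $S$ with underlying rates $r$ and parameter $d_N>0$ such that $$\lim_{N\to\infty}d_NN^{\kappa+2}(\log N)^{\kappa-3}=0.$$ Then $\lim_{N\to\infty}\mu_N(\mathcal E_N)=1$.
   Context: $\mathcal H_N=\{\eta\in\{0,1,2,\dots\}^S:\sum_{x\in S}\eta_x=N\}$; for $\eta$ with $\eta_x\ge1$, $\sigma^{x,y}\eta$ is obtained by moving one particle from $x$ to $y$ ($\sigma^{x,y}\eta=\eta$ if $\eta_x=0$). The inclusion process is the continuous-time Markov chain on $\mathcal H_N$ with generator $(\mathcal L_NF)(\eta)=\sum_{x\ne y}\eta_x(d_N+\eta_y)r(x,y)\{F(\sigma^{x,y}\eta)-F(\eta)\}$; $\mu_N$ is its unique invariant probability measure. $\xi_N^x$ is the configuration with all $N$ particles at $x$ and $\mathcal E_N=\{\xi_N^x:x\in S\}$. *)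

From HB Require Import structures.
From mathcomp Require Import all_boot all_order all_algebra.
From mathcomp Require Import all_classical all_reals all_analysis.
Set Implicit Arguments. Unset Strict Implicit. Unset Printing Implicit Defensive.
Import Order.TTheory GRing.Theory Num.Theory.
Local Open Scope ring_scope.

Section Inclusion.
Variables (S : finType) (N : nat).

Definition config := {ffun S -> 'I_N.+1}.

Definition HN : {set config} := [set eta : config | (\sum_(x : S) (eta x : nat) == N)%N].

Definition sigma (x y : S) (eta : config) : config :=
  if (0 < eta x)%N
  then [ffun z => inord ((eta z : nat) - (z == x) + (z == y))%N]
  else eta.

Definition gen (R : realType) (r : S -> S -> R) (dN : R) (F : config -> R)
    (eta : config) : R :=
  \sum_(x : S) \sum_(y : S | y != x)
     (eta x : nat)%:R * (dN + (eta y : nat)%:R) * r x y * (F (sigma x y eta) - F eta).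

Definition invariant_prob (R : realType) (r : S -> S -> R) (dN : R)
    (mu : config -> R) : Prop :=
  [/\ forall eta, 0 <= mu eta,
      forall eta, eta \notin HN -> mu eta = 0,
      \sum_(eta in HN) mu eta = 1
    & forall F : config -> R, \sum_(eta in HN) mu eta * gen r dN F eta = 0].

Definition xi (x : S) : config := [ffun z => if z == x then ord_max else ord0].
Definition EN : {set config} := [set xi x | x : S].

End Inclusion.

(* For every nonempty B in S the flux matrix A z y = r y z - r z y is antisymmetric,
   so a descent on the squared negative parts of A m produces a probability m_B on B
   with (A m_B) z >= -d_N on B: an approximate equilibrium of the symmetric game A.
   With H_k the harmonic numbers, the test function
     F eta = - (N + 1) |supp eta| - sum_z m_{supp eta} z H_{eta z}
   satisfies L_N F >= - C d_N N^2 on H_N, and L_N F >= - C d_N N^2 + c / (N + 1)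
   off E_N, where c is the least rate: moving a particle from x to y contributes
   (A m_B) terms that the equilibrium bounds below, an inflow term that is at least
   c / (N + 1) unless all particles sit at one site, and a jump of at least 1 when
   a site empties.  Integrating against the invariant mu_N gives
   mu_N (H_N \ E_N) = O(d_N N^3), which tends to 0 under the hypothesis as soon
   as |S| >= 2; for |S| <= 1 every configuration lies in E_N. *)

From HB Require Import structures.
From mathcomp Require Import all_boot all_order all_algebra.
From mathcomp Require Import all_classical all_reals all_analysis.
From mathcomp Require Import ring lra zify.
Set Implicit Arguments. Unset Strict Implicit. Unset Printing Implicit Defensive.
Import Order.TTheory GRing.Theory Num.Theory.
Local Open Scope ring_scope.

Section NegPart.
Variable R : realDomainType.
Implicit Types x h : R.

Definition neg_part x := Num.max (- x) 0.

Lemma neg_partE x : neg_part x = if x < 0 then - x else 0.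
Proof.
rewrite /neg_part; have [xlt0|xge0] := ltP x 0.
  by rewrite max_l // oppr_ge0 ltW.
by rewrite max_r // oppr_le0.
Qed.

Lemma neg_part_ge0 x : 0 <= neg_part x.
Proof. by rewrite /neg_part le_max lexx orbT. Qed.

Lemma neg_part_mulr x : neg_part x * x = - neg_part x ^+ 2.
Proof. by rewrite neg_partE; case: ltP; rewrite expr2; lra. Qed.

Lemma neg_part_sqrD x h :
  neg_part (x + h) ^+ 2 <= neg_part x ^+ 2 - 2 * neg_part x * h + h ^+ 2.
Proof. by rewrite !neg_partE; do 2 case: ltP => ?; rewrite ?expr2; nra. Qed.

End NegPart.

Section ApproxEquilibrium.
Variables (R : realFieldType) (T : finType) (A : T -> T -> R) (B : {set T}).
Hypothesis A_anti : forall x y, A x y = - A y x.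
Implicit Types (m w : T -> R) (e t : R).

Definition prob_on m :=
  [/\ forall z, 0 <= m z, forall z, z \notin B -> m z = 0 & \sum_z m z = 1].

Definition matvec m z := \sum_y A z y * m y.

Definition defect m := \sum_(z in B) neg_part (matvec m z) ^+ 2.

Definition mix t m m' y := (1 - t) * m y + t * m' y.

Definition normA := \sum_z \sum_y `|A z y|.

Lemma prob_on_le1 m : prob_on m -> forall z, m z <= 1.
Proof.
case=> m_ge0 _ m_sum1 z; rewrite -m_sum1 (bigD1 z) //= lerDl.
by apply: sumr_ge0 => y _.
Qed.

Lemma norm_matvec_le m z : prob_on m -> `|matvec m z| <= normA.
Proof.
move=> mP; have [m_ge0 _ _] := mP.
apply: le_trans (ler_norm_sum _ _ _) _.
apply: (@le_trans _ _ (\sum_y `|A z y|)).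
  apply: ler_sum => y _; rewrite normrM (ger0_norm (m_ge0 y)).
  by rewrite ler_piMr ?prob_on_le1.
rewrite /normA [X in _ <= X](bigD1 z) //= lerDl.
by apply: sumr_ge0 => x _; apply: sumr_ge0.
Qed.

Lemma matvec_mix t m m' z :
  matvec (mix t m m') z = matvec m z + t * (matvec m' z - matvec m z).
Proof.
rewrite /matvec -sumrB mulr_sumr -big_split /=.
by apply: eq_bigr => y _; rewrite /mix; ring.
Qed.

Lemma matvec_orth w : \sum_z w z * matvec w z = 0.
Proof.
set X := LHS; suff : X = - X by lra.
rewrite {1}/X /matvec; under eq_bigr do rewrite mulr_sumr.
rewrite exchange_big /= /X /matvec -sumrN; apply: eq_bigr => y _.
rewrite mulr_sumr -sumrN; apply: eq_bigr => z _.
by rewrite A_anti; ring.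
Qed.

Lemma prob_on_mix t m m' : 0 <= t <= 1 -> prob_on m -> prob_on m' ->
  prob_on (mix t m m').
Proof.
move=> /andP[t_ge0 t_le1] [m_ge0 m_out m_sum1] [m'_ge0 m'_out m'_sum1]; split.
- by move=> z; rewrite /mix addr_ge0 ?mulr_ge0 ?subr_ge0.
- by move=> z zB; rewrite /mix m_out ?m'_out ?mulr0 ?addr0.
- by rewrite big_split /= -!mulr_sumr m_sum1 m'_sum1; ring.
Qed.

Definition neg_weight m z := if z \in B then neg_part (matvec m z) else 0.

Definition descent_dir m z := neg_weight m z / \sum_y neg_weight m y.

Lemma neg_weight_ge0 m z : 0 <= neg_weight m z.
Proof. by rewrite /neg_weight; case: ifP => // _; apply: neg_part_ge0. Qed.

Lemma sum_neg_weight_gt0 m : 0 < defect m -> 0 < \sum_z neg_weight m z.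
Proof.
move=> defect_gt0; rewrite lt_def sumr_ge0 ?andbT; last by move=> z _; apply: neg_weight_ge0.
apply: contraTN defect_gt0 => /eqP/psumr_eq0P w0; rewrite -leNgt le_eqVlt; apply/orP; left.
apply/eqP/big1 => z zB; move: (w0 (fun y _ => neg_weight_ge0 m y) z isT).
by rewrite /neg_weight zB => ->; rewrite expr0n.
Qed.

Lemma prob_on_descent_dir m : 0 < defect m -> prob_on (descent_dir m).
Proof.
move=> /sum_neg_weight_gt0 s_gt0; split.
- by move=> z; rewrite divr_ge0 ?neg_weight_ge0 ?ltW.
- by move=> z zB; rewrite /descent_dir /neg_weight (negbTE zB) mul0r.
- by rewrite -mulr_suml divff // gt_eqF.
Qed.

Lemma neg_weightE m (F : T -> R) :
  \sum_(z in B) neg_part (matvec m z) * F z = \sum_z neg_weight m z * F z.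
Proof.
rewrite [RHS](bigID (mem B)) /= [X in _ = _ + X]big1 ?addr0.
  by apply: eq_bigr => z zB; rewrite /neg_weight zB.
by move=> z /negbTE zB; rewrite /neg_weight zB mul0r.
Qed.

(* [descent_dir m . A (descent_dir m)] vanishes by antisymmetry, and
   [descent_dir m] is proportional to the negative part of [A m] on [B]. *)
Lemma descent_dir_slope m : 0 < defect m ->
  \sum_(z in B) neg_part (matvec m z) * (matvec (descent_dir m) z - matvec m z)
  = defect m.
Proof.
move=> /sum_neg_weight_gt0 s_gt0; set s := \sum_z neg_weight m z in s_gt0.
rewrite neg_weightE.
have -> : \sum_z neg_weight m z * (matvec (descent_dir m) z - matvec m z)
    = s * \sum_z descent_dir m z * matvec (descent_dir m) z
      - \sum_z neg_weight m z * matvec m z.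
  rewrite mulr_sumr -sumrB; apply: eq_bigr => z _.
  by rewrite /descent_dir -/s; field; rewrite gt_eqF.
rewrite matvec_orth mulr0 sub0r -neg_weightE /defect -sumrN.
by apply: eq_bigr => z _; rewrite neg_part_mulr opprK.
Qed.

Definition mix_curvature := #|T|%:R * (2 * normA) ^+ 2.
Local Notation Kc := mix_curvature.

Lemma mix_curvature_ge0 : 0 <= Kc.
Proof. by rewrite mulr_ge0 ?ler0n ?sqr_ge0. Qed.

Lemma defect_mix_le t m m' : prob_on m -> prob_on m' ->
    \sum_(z in B) neg_part (matvec m z) * (matvec m' z - matvec m z) = defect m ->
  defect (mix t m m') <= (1 - 2 * t) * defect m + t ^+ 2 * Kc.
Proof.
move=> mP m'P slope; pose b z := matvec m' z - matvec m z.
have b_sqr_le z : b z ^+ 2 <= (2 * normA) ^+ 2.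
  have : `|b z| <= 2 * normA.
    by rewrite (le_trans (ler_normB _ _)) // mulr2n mulrDl mul1r lerD ?norm_matvec_le.
  by move=> bz; rewrite -real_normK ?num_real // lerXn2r ?nnegrE ?normr_ge0 // (le_trans _ bz).
have sum_b_le : \sum_(z in B) b z ^+ 2 <= Kc.
  apply: (le_trans (ler_sum _ (fun z _ => b_sqr_le z))).
  by rewrite sumr_const -[_ *+ #|B|]mulr_natl ler_wpM2r ?sqr_ge0 // ler_nat max_card.
apply: (@le_trans _ _ (\sum_(z in B)
    (neg_part (matvec m z) ^+ 2 - 2 * neg_part (matvec m z) * (t * b z) + (t * b z) ^+ 2))).
  by apply: ler_sum => z _; rewrite matvec_mix neg_part_sqrD.
rewrite !big_split /= -/(defect m).
have -> : \sum_(z in B) - (2 * neg_part (matvec m z) * (t * b z)) = - (2 * t * defect m).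
  by rewrite -slope mulr_sumr -sumrN; apply: eq_bigr => z _; rewrite /b; ring.
have -> : \sum_(z in B) (t * b z) ^+ 2 = t ^+ 2 * \sum_(z in B) b z ^+ 2.
  by rewrite mulr_sumr; apply: eq_bigr => z _; ring.
have : t ^+ 2 * \sum_(z in B) b z ^+ 2 <= t ^+ 2 * Kc by rewrite ler_wpM2l ?sqr_ge0.
lra.
Qed.

Lemma defect_decrease e m : 0 < e -> prob_on m -> e ^+ 2 < defect m ->
  exists2 m', prob_on m' & defect m' <= defect m - e ^+ 4 / (Kc + e ^+ 2).
Proof.
move=> e_gt0 mP e2_lt; have e2_gt0 : 0 < e ^+ 2 by rewrite exprn_gt0.
have D_gt0 : 0 < defect m by apply: lt_trans e2_lt.
have Kc_e2_gt0 : 0 < Kc + e ^+ 2 by rewrite ltr_wpDl ?mix_curvature_ge0.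
pose t := e ^+ 2 / (Kc + e ^+ 2).
have t_ge0 : 0 <= t by rewrite divr_ge0 ?ltW.
have t_le1 : t <= 1 by rewrite ler_pdivrMr // mul1r lerDr mix_curvature_ge0.
have tKc_le : t * Kc <= e ^+ 2.
  by rewrite mulrAC ler_pdivrMr // mulrDr lerDl mulr_ge0 ?ltW ?mix_curvature_ge0.
exists (mix t m (descent_dir m)).
  by apply: prob_on_mix => //; [apply/andP; split | apply: prob_on_descent_dir].
have := defect_mix_le t mP (prob_on_descent_dir D_gt0) (descent_dir_slope D_gt0).
have -> : e ^+ 4 / (Kc + e ^+ 2) = t * e ^+ 2 by rewrite /t; field; rewrite gt_eqF.
have : t * (t * Kc) <= t * e ^+ 2 by rewrite ler_wpM2l.
have : t * e ^+ 2 <= t * defect m by rewrite ler_wpM2l // ltW.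
rewrite expr2; nra.
Qed.

Lemma defect_descent_le e n m : 0 < e -> prob_on m ->
    defect m <= n%:R * (e ^+ 4 / (Kc + e ^+ 2)) ->
  exists2 m', prob_on m' & defect m' <= e ^+ 2.
Proof.
move=> e_gt0; elim: n m => [|n IHn] m mP D_le.
  by exists m => //; rewrite (le_trans D_le) // mul0r sqr_ge0.
have [D_le_e2|e2_lt] := leP (defect m) (e ^+ 2); first by exists m.
have [m' m'P D'_le] := defect_decrease e_gt0 mP e2_lt.
by apply: (IHn m' m'P); move: D_le; rewrite -natr1; lra.
Qed.

Lemma matvec_ge_of_defect_le e m z : 0 <= e -> defect m <= e ^+ 2 -> z \in B ->
  - e <= matvec m z.
Proof.
move=> e_ge0 D_le zB.
have : neg_part (matvec m z) <= e.
  rewrite -(@ler_pXn2r _ 2) ?nnegrE ?neg_part_ge0 //; apply: le_trans D_le.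
  rewrite /defect (bigD1 z) //= lerDl.
  by apply: sumr_ge0 => y _; apply: sqr_ge0.
by rewrite neg_partE; case: ltP; lra.
Qed.

End ApproxEquilibrium.

Lemma approx_equilibrium (R : archiRealFieldType) (T : finType) (A : T -> T -> R)
    (B : {set T}) e :
    (forall x y, A x y = - A y x) -> (0 < #|B|)%N -> 0 < e ->
  exists2 m, prob_on B m & forall z, z \in B -> - e <= matvec A m z.
Proof.
move=> A_anti /card_gt0P[b bB] e_gt0.
pose m0 z : R := (z == b)%:R.
have m0P : prob_on B m0.
  split=> [z | z zB | ]; rewrite /m0 ?ler0n //.
    by case: eqP zB => // ->; rewrite bB.
  by rewrite (bigD1 b) //= eqxx big1 ?addr0 // => z /negbTE ->.
set gain := e ^+ 4 / (mix_curvature A + e ^+ 2).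
have gain_gt0 : 0 < gain.
  by rewrite divr_gt0 ?exprn_gt0 // ltr_wpDl ?mix_curvature_ge0 // exprn_gt0.
pose n := (Num.truncn (defect A B m0 / gain)).+1.
have [m mP D_le] : exists2 m, prob_on B m & defect A B m <= e ^+ 2.
  apply: (@defect_descent_le _ _ _ _ A_anti e n m0) => //.
  by rewrite -ler_pdivrMr // ltW // truncnS_gt.
by exists m => // z zB; apply: matvec_ge_of_defect_le (ltW e_gt0) D_le zB.
Qed.

Section Configurations.
Variables (S : finType) (N : nat).
Implicit Types (eta : config S N) (x y z : S).

Definition supp eta : {set S} := [set z | (0 < eta z)%N].

Lemma HN_sum eta : eta \in HN S N -> (\sum_z (eta z : nat))%N = N.
Proof. by rewrite inE => /eqP. Qed.

Lemma HN_pair_le eta x y : eta \in HN S N -> x != y -> (eta x + eta y <= N)%N.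
Proof.
move=> /HN_sum etaN xy; rewrite -[X in (_ <= X)%N]etaN (bigD1 x) //= (bigD1 y) 1?eq_sym //=.
by rewrite addnA leq_addr.
Qed.

Lemma sigmaE eta x y z : eta \in HN S N -> x != y -> (0 < eta x)%N ->
  sigma x y eta z = (eta z - (z == x) + (z == y))%N :> nat.
Proof.
move=> etaH xy etax_gt0; rewrite /sigma etax_gt0 ffunE inordK //.
have := ltn_ord (eta z); have := HN_pair_le etaH xy.
by case: (eqVneq z y) => [->|_]; rewrite ?(negbTE xy) 1?eq_sym ?(negbTE xy); lia.
Qed.

Lemma sigma_id eta x y : eta x = 0%N :> nat -> sigma x y eta = eta.
Proof. by rewrite /sigma => ->. Qed.

Lemma supp_gt0 eta : (0 < N)%N -> eta \in HN S N -> (0 < #|supp eta|)%N.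
Proof.
move=> N_gt0 etaH; rewrite lt0n cards_eq0; apply: contraTN N_gt0 => /eqP supp0.
rewrite -leqNgt leqn0 -(HN_sum etaH); apply/eqP/big1 => z _; apply/eqP.
have : z \notin supp eta by rewrite supp0 inE.
by rewrite inE lt0n negbK.
Qed.

Lemma EN_subset_HN : EN S N \subset HN S N.
Proof.
apply/fintype.subsetP => _ /imsetP[x _ ->]; rewrite inE.
rewrite (bigD1 x) //= ffunE eqxx big1 ?addn0 // => z zx.
by rewrite ffunE (negbTE zx).
Qed.

Lemma notEN_lt eta y : eta \in HN S N -> eta \notin EN S N -> (eta y < N)%N.
Proof.
move=> etaH; apply: contraR; rewrite -leqNgt => N_le.
have etayN : eta y = N :> nat by apply/eqP; rewrite eqn_leq N_le -ltnS ltn_ord.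
apply/imsetP; exists y => //; apply/ffunP => z; apply: val_inj; rewrite ffunE /=.
case: (eqVneq z y) => [->//|zy]; have := HN_pair_le etaH zy; rewrite etayN /=; lia.
Qed.

Lemma HN_subset_EN : (#|S| <= 1)%N -> (0 < N)%N -> HN S N \subset EN S N.
Proof.
move=> S_le1 N_gt0; apply/fintype.subsetP => eta etaH; apply: contraT => etaNE.
have [x _] := card_gt0P (supp_gt0 N_gt0 etaH).
have := HN_sum etaH; rewrite (bigD1 x) //= big1 ?addn0 => [etaxN | z zx].
  by have := notEN_lt x etaH etaNE; rewrite etaxN ltnn.
by move: zx; rewrite (fintype_le1P S_le1 x z) eqxx.
Qed.

Lemma sigma_supp_eq eta x y : eta \in HN S N -> x != y ->
  (1 < eta x)%N -> (0 < eta y)%N -> supp (sigma x y eta) = supp eta.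
Proof.
move=> etaH xy etax_gt1 etay_gt0; apply/setP => z; rewrite !inE sigmaE //; last lia.
case: (eqVneq z x) => [->|zx]; first by rewrite (negbTE xy); lia.
by case: (eqVneq z y) => [->|zy]; lia.
Qed.

Lemma sigma_supp_proper eta x y : eta \in HN S N -> x != y ->
  eta x = 1%N :> nat -> (0 < eta y)%N -> supp (sigma x y eta) \proper supp eta.
Proof.
move=> etaH xy etax1 etay_gt0; have sE := sigmaE _ etaH xy; rewrite etax1 in sE.
apply/properP; split; last by exists x; rewrite !inE ?sE // etax1 // eqxx (negbTE xy).
apply/fintype.subsetP => z; rewrite !inE sE //.
case: (eqVneq z x) => [->|zx]; first by rewrite (negbTE xy); lia.
by case: (eqVneq z y) => [->|zy]; lia.
Qed.

End Configurations.

Section Lyapunov.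
Variables (R : realFieldType) (S : finType) (N : nat) (m : {set S} -> S -> R).
Hypotheses (m_prob : forall B : {set S}, (0 < #|B|)%N -> prob_on B (m B))
  (N_gt0 : (0 < N)%N).
Implicit Types (eta : config S N) (x y : S).

Local Notation harm k := (series (@harmonic R) k).

Lemma harm0 : harm 0 = 0.
Proof. by rewrite /series /= big_geq. Qed.

Lemma harm_ge0 k : 0 <= harm k.
Proof. by apply: sumr_ge0 => i _; apply: harmonic_ge0. Qed.

Lemma harm_le k : harm k <= k%:R.
Proof.
elim: k => [|k IHk]; first by rewrite harm0.
by rewrite seriesSr -natr1 lerD // invf_le1 ?ler1n ?ltr0n.
Qed.

Definition harm_weight eta := \sum_z m (supp eta) z * harm (eta z).

(* The weight [N + 1] of the support size dominates [harm_weight], which is at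
   most [N]; so emptying a site raises [lyap] by at least one. *)
Definition lyap eta : R := - (N.+1%:R * #|supp eta|%:R) - harm_weight eta.

Lemma harm_weight_bounds eta : 0 <= harm_weight eta <= N%:R.
Proof.
case: (posnP #|supp eta|) => [supp0 | supp_gt0].
  rewrite /harm_weight big1 ?lexx ?ler0n // => z _.
  have : z \notin supp eta by move/eqP: supp0; rewrite cards_eq0 => /eqP ->; rewrite inE.
  by rewrite inE -leqNgt leqn0 => /eqP ->; rewrite harm0 mulr0.
have [m_ge0 _ m_sum1] := m_prob supp_gt0.
rewrite sumr_ge0 => [|z _]; last by rewrite mulr_ge0 ?harm_ge0.
apply: (@le_trans _ _ (\sum_z m (supp eta) z * N%:R)); last by rewrite -mulr_suml m_sum1 mul1r.
apply: ler_sum => z _.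
by rewrite ler_wpM2l ?m_ge0 // (le_trans (harm_le _)) // ler_nat -ltnS.
Qed.

Lemma lyap_le0 eta : lyap eta <= 0.
Proof.
have /andP[W_ge0 _] := harm_weight_bounds eta.
by rewrite /lyap subr_le0 (le_trans _ W_ge0) // oppr_le0 mulr_ge0.
Qed.

Definition lyap_span : R := N.+1%:R * #|S|%:R + N%:R.

Lemma lyap_span_ge0 : 0 <= lyap_span.
Proof. by rewrite addr_ge0 ?mulr_ge0. Qed.

Lemma lyap_sub_ge eta eta' : - lyap_span <= lyap eta' - lyap eta.
Proof.
have /andP[_ W_le] := harm_weight_bounds eta'.
have : N.+1%:R * #|supp eta'|%:R <= N.+1%:R * #|S|%:R :> R.
  by rewrite ler_wpM2l // ler_nat max_card.
have := lyap_le0 eta; rewrite /lyap_span /lyap; lra.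
Qed.

Lemma harm_weight_sigma eta x y : eta \in HN S N -> x != y -> (0 < eta x)%N ->
    supp (sigma x y eta) = supp eta ->
  harm_weight (sigma x y eta) - harm_weight eta
  = m (supp eta) y / ((eta y)%:R + 1) - m (supp eta) x / (eta x)%:R.
Proof.
move=> etaH xy etax_gt0 supp_eq; have sE := sigmaE _ etaH xy etax_gt0.
rewrite /harm_weight supp_eq -sumrB (bigD1 x) //= (bigD1 y) 1?eq_sym //=.
rewrite big1 => [|z /andP[zx zy]]; last first.
  by rewrite sE (negbTE zx) (negbTE zy) subn0 addn0 subrr.
have harmx : harm (eta x) = harm (eta x).-1 + (eta x)%:R^-1.
  by rewrite -{1}(prednK etax_gt0) seriesSr /= prednK.
rewrite !sE !eqxx (negbTE xy) eq_sym (negbTE xy) addn0 subn0 subn1 addn1.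
by rewrite seriesSr harmx /= -natr1; ring.
Qed.

Lemma lyap_sigma_eq eta x y : eta \in HN S N -> x != y ->
    (1 < eta x)%N -> (0 < eta y)%N ->
  lyap (sigma x y eta) - lyap eta
  = m (supp eta) x / (eta x)%:R - m (supp eta) y / ((eta y)%:R + 1).
Proof.
move=> etaH xy etax_gt1 etay_gt0; have supp_eq := sigma_supp_eq etaH xy etax_gt1 etay_gt0.
have := harm_weight_sigma etaH xy (ltnW etax_gt1) supp_eq.
by rewrite /lyap supp_eq; lra.
Qed.

Lemma lyap_sigma_ge1 eta x y : eta \in HN S N -> x != y ->
  eta x = 1%N :> nat -> (0 < eta y)%N -> 1 <= lyap (sigma x y eta) - lyap eta.
Proof.
move=> etaH xy etax1 etay_gt0.
have /proper_card supp_lt := sigma_supp_proper etaH xy etax1 etay_gt0.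
have : N.+1%:R * (#|supp (sigma x y eta)|%:R + 1) <= N.+1%:R * #|supp eta|%:R :> R.
  by rewrite ler_wpM2l // natr1 ler_nat.
have /andP[_ W_le] := harm_weight_bounds (sigma x y eta).
have /andP[W_ge0 _] := harm_weight_bounds eta.
rewrite /lyap -natr1; lra.
Qed.

Lemma lyap_pair_ge eta x y : eta \in HN S N -> x != y ->
  m (supp eta) x * (eta y)%:R - m (supp eta) y * (eta x)%:R
    + m (supp eta) y * (eta x)%:R / ((eta y)%:R + 1)
  <= (eta x)%:R * (eta y)%:R * (lyap (sigma x y eta) - lyap eta).
Proof.
move=> etaH xy; set w := m (supp eta); set a : R := (eta x)%:R; set b : R := (eta y)%:R.
have wP := m_prob (supp_gt0 N_gt0 etaH).
have [w_ge0 w_out _] := wP; have w_le1 := prob_on_le1 wP.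
have w_supp z : eta z = 0%N :> nat -> w z = 0.
  by move=> etaz0; apply: w_out; rewrite inE etaz0.
have b_ge0 : 0 <= b by rewrite ler0n.
case: (posnP (eta x)) => [etax0 | etax_gt0].
  by rewrite /a etax0 (w_supp x etax0) sigma_id // subrr !(mul0r, mulr0, subr0, addr0).
case: (posnP (eta y)) => [etay0 | etay_gt0].
  by rewrite /b etay0 (w_supp y etay0) add0r divr1 !(mul0r, mulr0, subr0, addr0, sub0r, oppr0).
case: (ltngtP (eta x) 1) => [etax_lt1|etax_gt1|etax1].
- by move: etax_lt1; rewrite ltnNge etax_gt0.
- rewrite lyap_sigma_eq // -/w -/a -/b le_eqVlt; apply/orP; left; apply/eqP.
  by field; rewrite natr1 !pnatr_eq0 /= -lt0n.
- have ge1 := lyap_sigma_ge1 etaH xy etax1 etay_gt0.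
  have a1 : a = 1 by rewrite /a etax1.
  have wx_le1 : w x <= 1 := w_le1 x.
  have wx_ge0 : 0 <= w x := w_ge0 x.
  have wy_ge0 : 0 <= w y := w_ge0 y.
  have wy_le : w y / (b + 1) <= w y by rewrite ler_pdivrMr; [nra | lra].
  by rewrite a1; nra.
Qed.

End Lyapunov.

Definition flux (R : zmodType) (S : Type) (r : S -> S -> R) z y := r y z - r z y.

Lemma flux_anti (R : zmodType) (S : Type) (r : S -> S -> R) x y :
  flux r x y = - flux r y x.
Proof. by rewrite /flux opprB. Qed.

Lemma flux_pair_sum (R : realFieldType) (S : finType) (r : S -> S -> R) (w n : S -> R) :
  \sum_x \sum_y r x y * (w x * n y - w y * n x) = \sum_z n z * matvec (flux r) w z.
Proof.
transitivity (\sum_x \sum_y r x y * (w x * n y) - \sum_x \sum_y r x y * (w y * n x)).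
  by rewrite -sumrB; apply: eq_bigr => x _; rewrite -sumrB; apply: eq_bigr => y _; ring.
rewrite exchange_big /= -sumrB; apply: eq_bigr => z _.
rewrite /matvec mulr_sumr -sumrB; apply: eq_bigr => y _; rewrite /flux; ring.
Qed.

Lemma genE (R : realType) (S : finType) (N : nat) (r : S -> S -> R) (dN : R)
    (F : config S N -> R) (eta : config S N) :
  gen r dN F eta =
    \sum_x \sum_(y | y != x)
      (eta x)%:R * (eta y)%:R * r x y * (F (sigma x y eta) - F eta)
    + dN * \sum_x \sum_(y | y != x) (eta x)%:R * r x y * (F (sigma x y eta) - F eta).
Proof.
rewrite /gen mulr_sumr -big_split /=; apply: eq_bigr => x _.
by rewrite mulr_sumr -big_split /=; apply: eq_bigr => y _; ring.
Qed.

Lemma HN_sum_natr (R : numDomainType) (S : finType) (N : nat) (eta : config S N) :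
  eta \in HN S N -> \sum_z (eta z)%:R = N%:R :> R.
Proof. by move=> etaH; rewrite -natr_sum HN_sum. Qed.

Section Generator.
Variables (R : realType) (S : finType) (N : nat) (r : S -> S -> R) (dN c Rs : R)
  (m : {set S} -> S -> R).
Hypotheses (r_diag : forall x, r x x = 0) (r_ge0 : forall x y, 0 <= r x y)
  (r_ge : forall x y, x != y -> c <= r x y) (c_gt0 : 0 < c) (r_row : forall x, \sum_y r x y <= Rs)
  (dN_gt0 : 0 < dN) (N_gt0 : (0 < N)%N).
Hypotheses (m_prob : forall B : {set S}, (0 < #|B|)%N -> prob_on B (m B))
  (m_equil : forall B : {set S}, (0 < #|B|)%N ->
     forall z, z \in B -> - dN <= matvec (flux r) (m B) z).
Implicit Types (eta : config S N).

Local Notation span := (lyap_span R S N).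

Lemma drift_ge eta : eta \in HN S N ->
  - (dN * span * Rs * N%:R)
  <= dN * \sum_x \sum_(y | y != x)
       (eta x)%:R * r x y * (lyap m (sigma x y eta) - lyap m eta).
Proof.
move=> etaH.
suff sum_ge : - (span * Rs * N%:R) <= \sum_x \sum_(y | y != x)
    (eta x)%:R * r x y * (lyap m (sigma x y eta) - lyap m eta).
  by have := ler_wpM2l (ltW dN_gt0) sum_ge; rewrite mulrN !mulrA.
rewrite -(HN_sum_natr R etaH) mulr_sumr -sumrN; apply: ler_sum => x _.
apply: (@le_trans _ _ (\sum_(y | y != x) (eta x)%:R * r x y * - span)); last first.
  by apply: ler_sum => y _; rewrite ler_wpM2l ?mulr_ge0 ?ler0n ?lyap_sub_ge.
rewrite -mulr_suml -mulr_sumr mulrN lerN2.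
rewrite [X in _ <= X](_ : _ = (eta x)%:R * Rs * span); last by ring.
rewrite ler_wpM2r ?lyap_span_ge0 // ler_wpM2l ?ler0n //.
by apply: le_trans (r_row x); rewrite [X in _ <= X](bigD1 x) //= r_diag add0r.
Qed.

Lemma inflow_ge eta y : eta \in HN S N -> eta \notin EN S N ->
  c <= \sum_x r x y * (eta x)%:R.
Proof.
move=> etaH etaNE; have etay_lt := notEN_lt y etaH etaNE.
rewrite (bigD1 y) //= r_diag mul0r add0r.
apply: (@le_trans _ _ (\sum_(x | x != y) c * (eta x)%:R)); last first.
  by apply: ler_sum => x xy; rewrite ler_wpM2r ?ler0n ?r_ge // eq_sym.
rewrite -mulr_sumr -[X in X <= _]mulr1 ler_pM2l //.
have := HN_sum_natr R etaH; rewrite (bigD1 y) //= => sumN.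
have : (eta y)%:R + 1 <= N%:R :> R by rewrite natr1 ler_nat.
lra.
Qed.

Lemma equil_term_ge eta : eta \in HN S N ->
  - (dN * N%:R) <= \sum_z (eta z)%:R * matvec (flux r) (m (supp eta)) z.
Proof.
move=> etaH; rewrite -(HN_sum_natr R etaH) mulr_sumr -sumrN; apply: ler_sum => z _.
case: (boolP (z \in supp eta)) => [zsupp | ].
  by rewrite mulrC -mulrN ler_wpM2l ?ler0n ?m_equil ?supp_gt0.
by rewrite inE -eqn0Ngt => /eqP ->; rewrite !mul0r mulr0 oppr0.
Qed.

Lemma inflow_term_ge eta : eta \in HN S N ->
  (if eta \notin EN S N then c / N.+1%:R else 0)
  <= \sum_y m (supp eta) y / ((eta y)%:R + 1) * \sum_x r x y * (eta x)%:R.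
Proof.
move=> etaH; have [w_ge0 _ w_sum1] := m_prob (supp_gt0 N_gt0 etaH).
have term_ge0 y : 0 <= m (supp eta) y / ((eta y)%:R + 1).
  by rewrite divr_ge0 ?addr_ge0 ?ler0n.
case: ifPn => [etaNE | _]; last first.
  by apply: sumr_ge0 => y _; rewrite mulr_ge0 ?sumr_ge0 // => x _; rewrite mulr_ge0 ?ler0n.
have -> : c / N.+1%:R = \sum_y m (supp eta) y / N.+1%:R * c.
  by rewrite -mulr_suml -mulr_suml w_sum1 mul1r mulrC.
apply: ler_sum => y _; apply: ler_pM; rewrite ?divr_ge0 ?ler0n ?inflow_ge ?(ltW c_gt0) //.
rewrite ler_wpM2l // lef_pV2 ?posrE ?ltr_wpDl ?ltr0n //.
by rewrite natr1 ler_nat ltnS -ltnS ltn_ord.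
Qed.

Lemma pair_term_ge eta : eta \in HN S N ->
  - (dN * N%:R) + (if eta \notin EN S N then c / N.+1%:R else 0)
  <= \sum_x \sum_(y | y != x)
       (eta x)%:R * (eta y)%:R * r x y * (lyap m (sigma x y eta) - lyap m eta).
Proof.
move=> etaH; set w := m (supp eta); pose n z : R := (eta z)%:R.
pose L x y := r x y * (w x * n y - w y * n x + w y * n x / (n y + 1)).
apply: (@le_trans _ _ (\sum_x \sum_(y | y != x) L x y)); last first.
  apply: ler_sum => x _; apply: ler_sum => y yx.
  have xy : x != y by rewrite eq_sym.
  have := ler_wpM2l (r_ge0 x y) (lyap_pair_ge m_prob N_gt0 etaH xy).
  by rewrite -/w /L /n mulrCA mulrA.
have -> : \sum_x \sum_(y | y != x) L x y
    = \sum_z n z * matvec (flux r) w z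
      + \sum_y w y / (n y + 1) * \sum_x r x y * n x.
  have -> : \sum_y w y / (n y + 1) * \sum_x r x y * n x
      = \sum_x \sum_y r x y * (w y * n x / (n y + 1)).
    rewrite exchange_big /=; apply: eq_bigr => y _.
    by rewrite mulr_sumr; apply: eq_bigr => x _; ring.
  rewrite -flux_pair_sum -big_split /=; apply: eq_bigr => x _.
  rewrite -big_split /= [RHS](bigD1 x) //= r_diag !mul0r addr0 add0r.
  by apply: eq_bigr => y _; rewrite /L; ring.
by apply: lerD; [apply: equil_term_ge | apply: inflow_term_ge].
Qed.

Lemma gen_lyap_ge eta : eta \in HN S N ->
  - (dN * N%:R * (1 + span * Rs)) + (if eta \notin EN S N then c / N.+1%:R else 0)
  <= gen r dN (lyap m) eta.
Proof.
move=> etaH; rewrite genE.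
have := pair_term_ge etaH; have := drift_ge etaH; lra.
Qed.

End Generator.

Lemma invariant_mass_le (R : realType) (S : finType) (N : nat) (r : S -> S -> R)
    (dN : R) (mu F : config S N -> R) (A : {set config S N}) (a b : R) :
    invariant_prob r dN mu -> 0 < b ->
    (forall eta, eta \in HN S N -> - a + (if eta \in A then b else 0) <= gen r dN F eta) ->
  \sum_(eta in HN S N :&: A) mu eta <= a / b.
Proof.
move=> [mu_ge0 _ mu_sum1 mu_gen0] b_gt0 gen_ge.
have : \sum_(eta in HN S N) mu eta * (- a + (if eta \in A then b else 0)) <= 0.
  rewrite -[X in _ <= X](mu_gen0 F); apply: ler_sum => eta etaH.
  by rewrite ler_wpM2l ?gen_ge.
have -> : \sum_(eta in HN S N) mu eta * (- a + (if eta \in A then b else 0))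
    = - a + (\sum_(eta in HN S N :&: A) mu eta) * b.
  transitivity (\sum_(eta in HN S N) (- a * mu eta)
      + \sum_(eta in HN S N) (if eta \in A then mu eta * b else 0)).
    by rewrite -big_split; apply: eq_bigr => eta _; case: ifP => _; rewrite /=; ring.
  congr (_ + _); first by rewrite -mulr_sumr mu_sum1 mulr1.
  by rewrite mulr_suml -big_mkcondr; apply: eq_bigl => eta; rewrite !inE.
by rewrite ler_pdivlMr //; lra.
Qed.

Lemma offdiag_lower_bound (R : realFieldType) (S : finType) (r : S -> S -> R) :
    (forall x y, x != y -> 0 < r x y) ->
  exists2 c, 0 < c & forall x y, x != y -> c <= r x y.
Proof.
move=> r_gt0; set s := \sum_x \sum_(y | y != x) (r x y)^-1.
have s_ge0 : 0 <= s.
  by apply: sumr_ge0 => x _; apply: sumr_ge0 => y yx; rewrite invr_ge0 ltW // r_gt0 1?eq_sym.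
exists (1 + s)^-1; first by rewrite invr_gt0 ltr_wpDr.
move=> x y xy; rewrite -[r x y]invrK lef_pV2 ?posrE ?invr_gt0 ?r_gt0 ?ltr_wpDr //.
apply: (@le_trans _ _ s); last by rewrite lerDr.
rewrite /s (bigD1 x) //= (bigD1 y) 1?eq_sym //= -addrA lerDl addr_ge0 //.
  by apply: sumr_ge0 => z /andP[zx _]; rewrite invr_ge0 ltW ?r_gt0 1?eq_sym.
by apply: sumr_ge0 => z zx; apply: sumr_ge0 => w wz; rewrite invr_ge0 ltW // r_gt0 1?eq_sym.
Qed.

Lemma notEN_mass_le (R : realType) (S : finType) (N : nat) (r : S -> S -> R)
    (c Rs dN : R) (mu : config S N -> R) :
    (forall x, r x x = 0) -> (forall x y, 0 <= r x y) ->
    (forall x y, x != y -> c <= r x y) -> 0 < c -> (forall x, \sum_y r x y <= Rs) ->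
    0 < dN -> (0 < N)%N -> invariant_prob r dN mu ->
  \sum_(eta in HN S N :\: EN S N) mu eta
  <= dN * N%:R * (1 + lyap_span R S N * Rs) * N.+1%:R / c.
Proof.
move=> r_diag r_ge0 r_ge c_gt0 r_row dN_gt0 N_gt0 mu_inv.
have equil (B : {set S}) : exists m : S -> R, (0 < #|B|)%N ->
    prob_on B m /\ forall z, z \in B -> - dN <= matvec (flux r) m z.
  case: (posnP #|B|) => [_ | B_gt0]; first by exists (fun=> 0).
  have [m mP m_ge] := approx_equilibrium (flux_anti r) B_gt0 dN_gt0.
  by exists m.
have [m m_equil] := choice equil.
have gen_ge := gen_lyap_ge r_diag r_ge0 r_ge c_gt0 r_row dN_gt0 N_gt0
  (fun B B_gt0 => (m_equil B B_gt0).1) (fun B B_gt0 => (m_equil B B_gt0).2).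
rewrite finset.setDE -[X in _ <= X]mulrA -invf_div.
apply: invariant_mass_le mu_inv _ _; first by rewrite divr_gt0 ?ltr0n.
by move=> eta etaH; rewrite inE; apply: gen_ge.
Qed.

Lemma ln_ge_half (R : realType) (X : R) : 2 <= X -> 1 / 2 <= ln X.
Proof.
move=> X_ge2; have sqrte_le2 : expR (1 / 2) <= 2 :> R.
  have := expR_ge1Dx (- (1 / 2) : R); rewrite expRN.
  move=> /(ler_wpM2l (ltW (expR_gt0 (1 / 2)))); rewrite mulfV ?gt_eqF ?expR_gt0 //; lra.
by rewrite -[X in X <= _]expRK ler_ln ?posrE ?expR_gt0 //; lra.
Qed.

Lemma cube_le_rate (R : realType) (k : nat) (X d : R) :
    (2 <= k)%N -> 2 <= X -> 0 <= d ->
  d * X ^+ 3 <= 2 ^+ k * (d * X ^+ (k + 2) * ln X ^ (k%:Z - 3)).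
Proof.
move=> k_ge2 X_ge2 d_ge0.
have lnX_gt0 : 0 < ln X by rewrite ln_gt0 //; lra.
have -> : ln X ^ (k%:Z - 3) = ln X ^+ (k - 2) / ln X.
  rewrite (_ : k%:Z - 3 = (k - 2)%N%:Z + (- 1)); last by rewrite -subzn //; lia.
  by rewrite expfzDr ?gt_eqF // exprN1.
suff X3_le : X ^+ 3 <= X ^+ (k + 2) / ln X * (2 ^+ k * ln X ^+ (k - 2)).
  by apply: le_trans (ler_wpM2l d_ge0 X3_le) _; rewrite le_eqVlt; apply/orP; left; apply/eqP; ring.
have X_k1_le : X ^+ 3 <= X ^+ (k + 2) / ln X.
  have lnX_le : ln X <= X ^+ (k - 1).
    apply: le_trans (ltW (ln_sublinear _)) _; first lra.
    by rewrite -[X in X <= _]expr1 ler_eXn2l; [lia | lra].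
  rewrite ler_pdivlMr // (_ : (k + 2 = 3 + (k - 1))%N); last lia.
  by rewrite exprD ler_wpM2l // exprn_ge0 //; lra.
have half_pow_le : 1 <= 2 ^+ k * ln X ^+ (k - 2).
  apply: (@le_trans _ _ (2 ^+ k * (1 / 2) ^+ (k - 2))).
    rewrite -{1}(subnK k_ge2) exprD mulrAC -exprMn mul1r divff // expr1n mul1r.
    by rewrite expr2; lra.
  by rewrite ler_wpM2l ?exprn_ge0 // lerXn2r ?nnegrE ?ln_ge_half //; lra.
rewrite -[X in X <= _]mulr1 ler_pM ?exprn_ge0 //; lra.
Qed.

Lemma mass_bound_le_cube (R : realFieldType) (S : finType) (N : nat) (c Rs dN : R) :
    (0 < N)%N -> 0 <= Rs -> 0 <= dN -> 0 < c ->
  dN * N%:R * (1 + lyap_span R S N * Rs) * N.+1%:R / c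
  <= 2 * (1 + (2 * #|S|%:R + 1) * Rs) / c * (dN * N%:R ^+ 3).
Proof.
move=> N_gt0 Rs_ge0 dN_ge0 c_gt0.
have X_ge1 : 1 <= N%:R :> R by rewrite ler1n.
have K_ge0 : 0 <= #|S|%:R :> R by [].
have span_le : lyap_span R S N <= N%:R * (2 * #|S|%:R + 1).
  rewrite /lyap_span -natr1; nra.
have weight_le : 1 + lyap_span R S N * Rs <= N%:R * (1 + (2 * #|S|%:R + 1) * Rs).
  have := ler_wpM2r Rs_ge0 span_le; nra.
set W := 1 + (2 * #|S|%:R + 1) * Rs.
rewrite ler_pdivrMr // (_ : _ * c = dN * N%:R * (N%:R * W) * (2 * N%:R)); last first.
  by field; rewrite gt_eqF.
have dNX_ge0 : 0 <= dN * N%:R by rewrite mulr_ge0.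
apply: ler_pM; rewrite ?ler0n ?mulr_ge0 ?addr_ge0 ?lyap_span_ge0 ?ler_wpM2l //.
  by rewrite mulr_ge0 ?lyap_span_ge0.
by rewrite -natr1; lra.
Qed.

Import numFieldNormedType.Exports.
Local Open Scope classical_set_scope.

Lemma cvg_dominated0 (R : realType) (f g : nat -> R) (C : R) :
    (\forall N \near \oo, 0 <= f N <= C * g N) -> g @ \oo --> 0 -> f @ \oo --> 0.
Proof.
move=> f_bounds g_cvg0; apply: (squeeze_cvgr f_bounds); first exact: cvg_cst.
by rewrite -(mulr0 C); apply: cvgMl_tmp.
Qed.

Lemma cvg_cube0 (R : realType) (k : nat) (d : nat -> R) :
    (2 <= k)%N -> (forall N, 0 <= d N) ->
    (fun N : nat => d N * N%:R ^+ (k + 2) * ln (N%:R : R) ^ (k%:Z - 3)) @ \oo --> 0 ->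
  (fun N : nat => d N * N%:R ^+ 3) @ \oo --> 0.
Proof.
move=> k_ge2 d_ge0; apply: (@cvg_dominated0 _ _ _ (2 ^+ k)); exists 2%N => // N /= N_ge2.
by rewrite mulr_ge0 ?exprn_ge0 //= cube_le_rate // ler_nat.
Qed.

Lemma EN_mass (R : realType) (S : finType) (N : nat) (mu : config S N -> R) :
  \sum_(eta in HN S N) mu eta = 1 ->
  \sum_(eta in EN S N) mu eta = 1 - \sum_(eta in HN S N :\: EN S N) mu eta.
Proof.
move=> <-; rewrite [X in _ = X - _](big_setID (EN S N)) /= addrK.
by apply: eq_bigl => eta; rewrite (finset.setIidPr (EN_subset_HN S N)).
Qed.

Lemma notEN_mass_eq0 (R : realType) (S : finType) (N : nat) (mu : config S N -> R) :
  (#|S| <= 1)%N -> (0 < N)%N -> \sum_(eta in HN S N :\: EN S N) mu eta = 0.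
Proof.
move=> S_le1 N_gt0; rewrite (_ : HN S N :\: EN S N = finset.set0) ?big_set0 //.
by apply/eqP; rewrite finset.setD_eq0 HN_subset_EN.
Qed.

Lemma notEN_mass_le_cube (R : realType) (S : finType) (r : S -> S -> R) :
    (forall x, r x x = 0) -> (forall x y, x != y -> 0 < r x y) ->
  exists C : R, forall N (dN : R) (mu : config S N -> R),
    0 < dN -> (0 < N)%N -> invariant_prob r dN mu ->
    \sum_(eta in HN S N :\: EN S N) mu eta <= C * (dN * N%:R ^+ 3).
Proof.
move=> r_diag r_gt0; have [c c_gt0 r_ge] := offdiag_lower_bound r_gt0.
have r_ge0 x y : 0 <= r x y.
  by case: (eqVneq x y) => [->|xy]; rewrite ?r_diag // ltW ?r_gt0.
pose Rs := \sum_x \sum_y r x y.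
have Rs_ge0 : 0 <= Rs by apply: sumr_ge0 => x _; apply: sumr_ge0.
have r_row x : \sum_y r x y <= Rs.
  by rewrite /Rs [X in _ <= X](bigD1 x) //= lerDl; apply: sumr_ge0 => z _; apply: sumr_ge0.
exists (2 * (1 + (2 * #|S|%:R + 1) * Rs) / c) => N dN mu dN_gt0 N_gt0 mu_inv.
apply: le_trans (notEN_mass_le r_diag r_ge0 r_ge c_gt0 r_row dN_gt0 N_gt0 mu_inv) _.
by apply: mass_bound_le_cube => //; apply: ltW.
Qed.

Theorem theorem3p15 (R : realType) (S : finType) (r : S -> S -> R)
    (d : nat -> R) (mu : forall N : nat, config S N -> R) :
  (forall x, r x x = 0) ->
  (forall x y, x != y -> 0 < r x y) ->
  (forall N, 0 < d N) ->
  (fun N : nat => d N * N%:R ^+ (#|S| + 2) * (ln (N%:R : R)) ^ (#|S|%:Z - 3))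
     @ \oo --> (0 : R) ->
  (forall N, invariant_prob r (d N) (mu N)) ->
  (fun N : nat => \sum_(eta in EN S N) mu N eta) @ \oo --> (1 : R).
Proof.
move=> r_diag r_gt0 d_gt0 rate_cvg0 mu_inv.
pose u N := \sum_(eta in HN S N :\: EN S N) mu N eta.
have mass_N N : \sum_(eta in EN S N) mu N eta = 1 - u N.
  by have [_ _ mu_sum1 _] := mu_inv N; apply: EN_mass.
suff u_cvg0 : u @ \oo --> 0.
  rewrite (funext mass_N) -[X in _ --> X]subr0.
  by apply: cvgB => //; apply: cvg_cst.
case: (leqP #|S| 1) => [S_le1 | S_gt1].
  by apply: cvg_near_cst; exists 1%N => // N /= N_gt0; apply: notEN_mass_eq0.
have [C mass_le] := notEN_mass_le_cube r_diag r_gt0.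
have cube_cvg0 : (fun N : nat => d N * N%:R ^+ 3) @ \oo --> 0.
  by apply: (cvg_cube0 S_gt1 _ rate_cvg0) => N; apply: ltW.
apply: (@cvg_dominated0 _ _ _ C _ cube_cvg0); exists 1%N => // N /= N_gt0.
have [mu_ge0 _ _ _] := mu_inv N.
by rewrite sumr_ge0 ?mass_le //= => eta _; apply: mu_ge0.
Qed.
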